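(* Assume the Bellman setting below and hypotheses (H1)–(H4). For each $i$ let $\mathcal P_i'$ be a nonempty subset of $\mathcal P_i$ and put $\mathcal P'=\mathcal P_0'\times\cdots\times\mathcal P_M'$. Suppose $A(P)$ is nonsingular for every $P\in\mathcal P'$, and that for every $U\in\mathbb R^{M+1}$, $H(U;\mathcal P)\le0$ whenever $H(U;\mathcal P')=0$, where $H(U;\mathcal Q)=\sup_{P\in\mathcal Q}\{-A(P)U+y(P)\}$. Then every sequence $(U^\ell)_\ell$ produced by $\epsilon$-policy iteration on $\mathcal P'$ converges to the unique solution of the Bellman problem $H(U;\mathcal P)=0$.
   Context: Bellman setting: Let $M\ge 0$ be an integer and $\mathcal P=\mathcal P_0\times\cdots\times\mathcal P_M$ a product of nonempty sets; write $P=(P_0,\dots,P_M)\in\mathcal P$. Let $A:\mathcal P\to\mathbb R^{(M+1)\times(M+1)}$ and $y:\mathcal P\to\mathbb R^{M+1}$ be row-decoupled: for each $i$, the $i$-th row of $A(P)$ and the $i$-th entry of $y(P)$ depend only on $P_i$. Inequalities between vectors are entrywise and suprema of families of vectors are entrywise. $\vec e=(1,\dots,1)^\top$. Row $i$ of a matrix $(a_{ij})$ is strictly diagonally dominant (s.d.d.) if $|a_{ii}|>\sum_{j\ne i}|a_{ij}|$, weakly diagonally dominant (w.d.d.) if $|a_{ii}|\ge\sum_{j\ne i}|a_{ij}|$; a matrix is w.d.d. if all rows are. A Z-matrix is a real matrix with nonpositive off-diagonal entries. (H1): $P\mapsto A(P)^{-1}$ is bounded on $\{P: A(P)\text{ nonsingular}\}$.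 (H2): $A$ and $y$ are bounded. (H3): for each $P$, $A(P)$ is a w.d.d. Z-matrix with nonnegative diagonal entries, and $[A(P)]_{ii}\le1$ whenever row $i$ of $A(P)$ is not s.d.d. Define $[\hat y(P)]_i=[y(P)]_i$ if row $i$ of $A(P)$ is not s.d.d. and $-\infty$ otherwise, and $[\mathbb M X]_i=\sup_{P\in\mathcal P}\{(1-[A(P)]_{ii})X_i-\sum_{j\ne i}[A(P)]_{ij}X_j+[\hat y(P)]_i\}$ for vectors with entries in $[-\infty,\infty)$, with conventions $0\cdot(-\infty)=0$ and any sum containing $-\infty$ equals $-\infty$; $\mathbb M^0=I$, $\mathbb M^k=\mathbb M\circ\mathbb M^{k-1}$. (H4): for each $U\in\mathbb R^{M+1}$ and each $i$ there exist integers $0\le m_1<m_2$ with $[\mathbb M^{m_1}U]_i>[\mathbb M^{m_2}U]_i$. $\epsilon$-policy iteration on $\mathcal Q=\mathcal Q_0\times\cdots\times\mathcal Q_M$: pick any $U^0$ and positive $(\epsilon^\ell)_{\ell\ge1}$ with $\sum\epsilon^\ell<\infty$; for $\ell\ge1$ pick $P^\ell\in\mathcal Q$ with $-A(P^\ell)U^{\ell-1}+y(P^\ell)+\epsilon^\ell\vec e\ge\sup_{P\in\mathcal Q}\{-A(P)U^{\ell-1}+y(P)\}$ and let $U^\ell$ solve $A(P^\ell)U^\ell=y(P^\ell)$. *)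

From Stdlib Require Import Reals Lra ClassicalEpsilon.
Open Scope R_scope.

(* Indices are natural numbers 0..M; vectors are nat -> R (entries > M unused).
   Policies: a single ambient type T; P_i is a predicate on T; a policy is
   P : nat -> T, and P lies in the product set iff P i satisfies P_i for i <= M.
   Row-decoupling is built in: the (i,j) entry of A(P) is  a i (P i) j  and the
   i-th entry of y(P) is  y i (P i). *)

(* Extended reals [-oo, oo): None = -oo. *)
Definition ext := option R.
Definition eadd (x z : ext) : ext :=
  match x, z with Some u, Some v => Some (u + v) | _, _ => None end.
(* c * x, with 0 * (-oo) = 0  (only used with c >= 0 in relevant cases) *)
Definition emul (c : R) (x : ext) : ext :=
  match x with
  | Some v => Some (c * v)
  | None => if Req_EM_T c 0 then Some 0 else None
  end.
Definition elt (x z : ext) : Prop :=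
  match x, z with
  | None, Some _ => True
  | Some u, Some v => u < v
  | _, _ => False
  end.
Definition ele (x z : ext) : Prop :=
  match x, z with
  | None, _ => True
  | Some u, Some v => u <= v
  | Some _, None => False
  end.
Fixpoint esum (f : nat -> ext) (n : nat) : ext :=
  match n with O => f O | S k => eadd (esum f k) (f (S k)) end.

(* Supremum of a family of [-oo,oo) values, given the set S of its finite values:
   -oo if S is empty, the least upper bound if S is nonempty and bounded.
   (The unbounded case, +oo, never arises under (H2); it is sent to -oo.) *)
Definition esup (S : R -> Prop) : ext :=
  match excluded_middle_informative (bound S /\ exists x, S x) with
  | left h => Some (proj1_sig (completeness S (proj1 h) (proj2 h)))
  | right _ => None
  end.

Definition inP (M : nat) {T : Type} (Q : nat -> T -> Prop) (P : nat -> T) : Prop :=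
  forall i, (i <= M)%nat -> Q i (P i).

Definition Amat {T : Type} (a : nat -> T -> nat -> R) (P : nat -> T) : nat -> nat -> R :=
  fun i j => a i (P i) j.

Definition matvec (M : nat) {T : Type} (a : nat -> T -> nat -> R) (P : nat -> T)
  (U : nat -> R) (i : nat) : R :=
  sum_f_R0 (fun j => a i (P i) j * U j) M.

Definition Hsup (M : nat) {T : Type} (a : nat -> T -> nat -> R) (y : nat -> T -> R)
  (Q : nat -> T -> Prop) (U : nat -> R) (i : nat) : ext :=
  esup (fun r => exists P, inP M Q P /\ r = - matvec M a P U i + y i (P i)).

Definition offdiag_abs (M : nat) {T : Type} (a : nat -> T -> nat -> R) (i : nat) (t : T) : R :=
  sum_f_R0 (fun j => if Nat.eq_dec j i then 0 else Rabs (a i t j)) M.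

Definition sdd_row (M : nat) {T : Type} (a : nat -> T -> nat -> R) (i : nat) (t : T) : Prop :=
  Rabs (a i t i) > offdiag_abs M a i t.
Definition wdd_row (M : nat) {T : Type} (a : nat -> T -> nat -> R) (i : nat) (t : T) : Prop :=
  Rabs (a i t i) >= offdiag_abs M a i t.

Definition yhat (M : nat) {T : Type} (a : nat -> T -> nat -> R) (y : nat -> T -> R)
  (i : nat) (t : T) : ext :=
  match excluded_middle_informative (sdd_row M a i t) with
  | left _ => None
  | right _ => Some (y i t)
  end.

Definition Mterm (M : nat) {T : Type} (a : nat -> T -> nat -> R) (y : nat -> T -> R)
  (i : nat) (t : T) (X : nat -> ext) : ext :=
  eadd (eadd (emul (1 - a i t i) (X i))
             (esum (fun j => if Nat.eq_dec j i then Some 0 else emul (- a i t j) (X j)) M))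
       (yhat M a y i t).

Definition Mop (M : nat) {T : Type} (a : nat -> T -> nat -> R) (y : nat -> T -> R)
  (Pset : nat -> T -> Prop) (X : nat -> ext) (i : nat) : ext :=
  esup (fun r => exists P, inP M Pset P /\ Mterm M a y i (P i) X = Some r).

Fixpoint Mpow (M : nat) {T : Type} (a : nat -> T -> nat -> R) (y : nat -> T -> R)
  (Pset : nat -> T -> Prop) (k : nat) (X : nat -> ext) : nat -> ext :=
  match k with
  | O => X
  | S k' => Mop M a y Pset (Mpow M a y Pset k' X)
  end.

Definition matmul_entry (M : nat) (A B : nat -> nat -> R) (i j : nat) : R :=
  sum_f_R0 (fun k => A i k * B k j) M.

Definition is_inverse (M : nat) (A B : nat -> nat -> R) : Prop :=
  forall i j, (i <= M)%nat -> (j <= M)%nat ->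
    matmul_entry M A B i j = (if Nat.eq_dec i j then 1 else 0) /\
    matmul_entry M B A i j = (if Nat.eq_dec i j then 1 else 0).

Definition nonsingular (M : nat) (A : nat -> nat -> R) : Prop :=
  exists B, is_inverse M A B.

Definition H1 (M : nat) {T : Type} (a : nat -> T -> nat -> R) (Pset : nat -> T -> Prop) : Prop :=
  exists C, forall P B, inP M Pset P -> is_inverse M (Amat a P) B ->
    forall i j, (i <= M)%nat -> (j <= M)%nat -> Rabs (B i j) <= C.

Definition H2 (M : nat) {T : Type} (a : nat -> T -> nat -> R) (y : nat -> T -> R)
  (Pset : nat -> T -> Prop) : Prop :=
  exists C, forall P, inP M Pset P ->
    forall i, (i <= M)%nat -> Rabs (y i (P i)) <= C /\
      forall j, (j <= M)%nat -> Rabs (a i (P i) j) <= C.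

Definition H3 (M : nat) {T : Type} (a : nat -> T -> nat -> R) (Pset : nat -> T -> Prop) : Prop :=
  forall P, inP M Pset P -> forall i, (i <= M)%nat ->
    wdd_row M a i (P i) /\
    (forall j, (j <= M)%nat -> j <> i -> a i (P i) j <= 0) /\
    0 <= a i (P i) i /\
    (~ sdd_row M a i (P i) -> a i (P i) i <= 1).

Definition H4 (M : nat) {T : Type} (a : nat -> T -> nat -> R) (y : nat -> T -> R)
  (Pset : nat -> T -> Prop) : Prop :=
  forall (U : nat -> R) i, (i <= M)%nat ->
    exists m1 m2, (m1 < m2)%nat /\
      elt (Mpow M a y Pset m2 (fun j => Some (U j)) i)
          (Mpow M a y Pset m1 (fun j => Some (U j)) i).

Definition eps_policy_iteration (M : nat) {T : Type} (a : nat -> T -> nat -> R)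
  (y : nat -> T -> R) (Q : nat -> T -> Prop)
  (eps : nat -> R) (Pol : nat -> nat -> T) (U : nat -> nat -> R) : Prop :=
  (forall l, (1 <= l)%nat -> 0 < eps l) /\
  (exists s, Un_cv (fun n => sum_f_R0 eps n) s) /\
  forall l, (1 <= l)%nat ->
    inP M Q (Pol l) /\
    (forall i, (i <= M)%nat ->
       ele (Hsup M a y Q (U (l - 1)%nat) i)
           (Some (- matvec M a (Pol l) (U (l - 1)%nat) i + y i (Pol l i) + eps l))) /\
    (forall i, (i <= M)%nat -> matvec M a (Pol l) (U l) i = y i (Pol l i)).

From Stdlib Require Import Reals Lra Lia ClassicalEpsilon Classical.
From mathcomp Require all_boot all_algebra Rstruct.
Open Scope R_scope.

(* Under (H3) each A(P) is a w.d.d. Z-matrix, and such a matrix is singular only if some set of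
   rows with zero row sums is closed under its nonzero pattern; on such a set the operator M
   loses at most d per iteration when P is d-optimal for a solution V, which (H4) forbids.
   Hence d-optimal policies are monotone matrices with inverses bounded by (H1), giving a
   comparison principle (a solution lies below every supersolution) and so uniqueness.
   Along eps-policy iteration the iterates stay bounded and increase up to the summable
   errors eps^l, so they converge; the limit solves H(.;P') = 0, hence H(.;P) = 0. Running
   the iteration once (it exists since every A(P), P in P', is invertible) gives existence. *)

Lemma sum_f_R0_split_at (f : nat -> R) (n p : nat) : (p <= n)%nat ->
  sum_f_R0 f n = f p + sum_f_R0 (fun j => if Nat.eq_dec j p then 0 else f j) n.
Proof.
  induction n as [|n IH]; intros Hp.
  - assert (p = 0%nat) by lia; subst. simpl. destruct (Nat.eq_dec 0 0); [lra|congruence].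
  - rewrite !tech5. destruct (Nat.eq_dec (S n) p) as [<-|ne].
    + rewrite (sum_eq (fun j => if Nat.eq_dec j (S n) then 0 else f j) f); [lra|].
      intros i Hi. destruct (Nat.eq_dec i (S n)); [lia|reflexivity].
    + rewrite (IH ltac:(lia)). lra.
Qed.

Lemma sum_f_R0_opp (f : nat -> R) n : sum_f_R0 (fun j => - f j) n = - sum_f_R0 f n.
Proof. induction n; simpl; [lra|rewrite IHn; lra]. Qed.

Lemma sum_f_R0_nonneg (f : nat -> R) n :
  (forall j, (j <= n)%nat -> 0 <= f j) -> 0 <= sum_f_R0 f n.
Proof.
  intros H. apply Rle_trans with (sum_f_R0 (fun _ => 0) n).
  - rewrite sum_cte. lra.
  - apply sum_Rle. auto.
Qed.

Lemma sum_f_R0_nonneg_eq0 (f : nat -> R) n : (forall j, (j <= n)%nat -> 0 <= f j) ->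
  sum_f_R0 f n = 0 -> forall j, (j <= n)%nat -> f j = 0.
Proof.
  intros H Hs j Hj. rewrite (sum_f_R0_split_at f n j Hj) in Hs.
  assert (0 <= sum_f_R0 (fun k => if Nat.eq_dec k j then 0 else f k) n).
  { apply sum_f_R0_nonneg. intros k Hk. destruct (Nat.eq_dec k j); [lra|auto]. }
  specialize (H j Hj). lra.
Qed.

Lemma sum_f_R0_comm (f : nat -> nat -> R) m n :
  sum_f_R0 (fun j => sum_f_R0 (fun k => f j k) n) m =
  sum_f_R0 (fun k => sum_f_R0 (fun j => f j k) m) n.
Proof.
  induction m; simpl; [reflexivity|].
  rewrite IHm, <- sum_plus. reflexivity.
Qed.

Lemma sum_f_R0_delta (g : nat -> R) n i : (i <= n)%nat ->
  sum_f_R0 (fun k => (if Nat.eq_dec i k then 1 else 0) * g k) n = g i.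
Proof.
  intros Hi. rewrite (sum_f_R0_split_at _ n i Hi).
  destruct (Nat.eq_dec i i); [|congruence].
  rewrite (sum_eq _ (fun _ => 0)), sum_cte; [lra|].
  intros k Hk. destruct (Nat.eq_dec k i); [reflexivity|].
  destruct (Nat.eq_dec i k); [lia|lra].
Qed.

Lemma sum_f_R0_le_const (f : nat -> R) n c :
  (forall j, (j <= n)%nat -> f j <= c) -> sum_f_R0 f n <= c * INR (S n).
Proof. intros H. rewrite <- sum_cte. apply sum_Rle. auto. Qed.

Lemma finite_argmax n (x : nat -> R) :
  exists p, (p <= n)%nat /\ forall j, (j <= n)%nat -> x j <= x p.
Proof.
  induction n as [|n [p [Hp Hm]]].
  - exists 0%nat. split; [lia|]. intros j Hj. replace j with 0%nat by lia. lra.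
  - destruct (Rle_dec (x p) (x (S n))).
    + exists (S n). split; [lia|]. intros j Hj.
      destruct (Nat.eq_dec j (S n)) as [->|]; [lra|]. specialize (Hm j ltac:(lia)). lra.
    + exists p. split; [lia|]. intros j Hj.
      destruct (Nat.eq_dec j (S n)) as [->|]; [lra|]. apply Hm; lia.
Qed.

Lemma finite_choice {T : Type} (t0 : T) n (Rl : nat -> T -> Prop) :
  (forall i, (i <= n)%nat -> exists t, Rl i t) ->
  exists f : nat -> T, forall i, (i <= n)%nat -> Rl i (f i).
Proof.
  intros H.
  assert (H' : forall i, exists t, (i <= n)%nat -> Rl i t).
  { intros i. destruct (Compare_dec.le_dec i n) as [Hi|Hi].
    - destruct (H i Hi) as [t Ht]. exists t; auto.
    - exists t0. intros; contradiction. }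
  exists (fun i => proj1_sig (constructive_indefinite_description _ (H' i))).
  intros i Hi. exact (proj2_sig (constructive_indefinite_description _ (H' i)) Hi).
Qed.

Lemma finite_eventually n (Q : nat -> nat -> Prop) :
  (forall p, (p <= n)%nat -> exists N, forall k, (k >= N)%nat -> Q p k) ->
  exists N, forall k, (k >= N)%nat -> forall p, (p <= n)%nat -> Q p k.
Proof.
  induction n as [|n IH]; intros H.
  - destruct (H 0%nat (le_n 0)) as [N HN]. exists N. intros k Hk p Hp.
    replace p with 0%nat by lia. auto.
  - destruct IH as [N1 H1]; [intros; apply H; lia|].
    destruct (H (S n) (le_n _)) as [N2 H2].
    exists (max N1 N2). intros k Hk p Hp.
    destruct (Nat.eq_dec p (S n)) as [->|ne]; [apply H2|apply H1]; lia.
Qed.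

Lemma finite_small n (Q : nat -> R -> Prop) :
  (forall p, (p <= n)%nat -> exists e, 0 < e /\ forall d, 0 < d < e -> Q p d) ->
  exists e, 0 < e /\ forall d, 0 < d < e -> forall p, (p <= n)%nat -> Q p d.
Proof.
  induction n as [|n IH]; intros H.
  - destruct (H 0%nat (le_n 0)) as [e [He Hq]]. exists e; split; auto.
    intros d Hd p Hp. replace p with 0%nat by lia. auto.
  - destruct IH as [e1 [He1 H1]]; [intros; apply H; lia|].
    destruct (H (S n) (le_n _)) as [e2 [He2 H2]].
    exists (Rmin e1 e2). split; [apply Rmin_case; lra|].
    intros d Hd p Hp. pose proof (Rmin_l e1 e2). pose proof (Rmin_r e1 e2).
    destruct (Nat.eq_dec p (S n)) as [->|ne]; [apply H2; lra|apply H1; [lra|lia]].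
Qed.

Lemma Un_cv_ext (u v : nat -> R) l : (forall n, u n = v n) -> Un_cv u l -> Un_cv v l.
Proof. intros E H e He. destruct (H e He) as [N HN]. exists N. intros n Hn. rewrite <- E. auto. Qed.

Lemma Un_cv_unshift (u : nat -> R) l : Un_cv (fun n => u (S n)) l -> Un_cv u l.
Proof.
  intros H e He. destruct (H e He) as [N HN]. exists (S N). intros n Hn.
  destruct n as [|n]; [lia|]. apply HN. lia.
Qed.

Lemma series_term_small (e : nat -> R) s : Un_cv (fun n => sum_f_R0 e n) s ->
  forall eta, 0 < eta -> exists N, forall n, (n >= N)%nat -> e n < eta.
Proof.
  intros Hs eta He. destruct (Hs (eta / 2) ltac:(lra)) as [N HN]. exists (S N).
  intros [|n] Hn; [lia|].
  pose proof (HN (S n) ltac:(lia)) as H1. pose proof (HN n ltac:(lia)) as H2.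
  unfold R_dist in *. rewrite tech5 in H1.
  apply Rabs_def2 in H1. apply Rabs_def2 in H2. lra.
Qed.

Lemma cv_almost_increasing (u e : nat -> R) Bu Be :
  (forall n, 0 <= e n) -> (forall n, sum_f_R0 e n <= Be) -> (forall n, u n <= Bu) ->
  (forall n, u n - u (S n) <= e (S n)) -> exists l, Un_cv u l.
Proof.
  intros He HBe HBu Hstep.
  destruct (growing_cv (fun n => sum_f_R0 e n)) as [ls Hls].
  { intros n. simpl. pose proof (He (S n)). lra. }
  { exists Be. intros r [n ->]. auto. }
  destruct (growing_cv (fun n => u n + sum_f_R0 e n)) as [lY HlY].
  { intros n. simpl. pose proof (Hstep n). lra. }
  { exists (Bu + Be). intros r [n ->]. pose proof (HBu n). pose proof (HBe n). lra. }
  exists (lY - ls). apply (Un_cv_ext (fun n => (u n + sum_f_R0 e n) - sum_f_R0 e n)).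
  - intros n. ring.
  - apply CV_minus; auto.
Qed.

Lemma esup_lub S l : esup S = Some l -> is_lub S l.
Proof.
  unfold esup. destruct (excluded_middle_informative _) as [h|h]; intros E; [|discriminate].
  inversion E; subst. exact (proj2_sig (completeness S (proj1 h) (proj2 h))).
Qed.

Lemma esup_finite S : bound S -> (exists x, S x) -> exists l, esup S = Some l.
Proof.
  intros Hb Hn. unfold esup. destruct (excluded_middle_informative _) as [h|h].
  - eexists; reflexivity.
  - exfalso; auto.
Qed.

Lemma esup_le S v : (forall r, S r -> r <= v) -> ele (esup S) (Some v).
Proof.
  intros H. destruct (esup S) eqn:E; simpl; auto.
  apply (proj2 (esup_lub S r E)). intros x Hx; auto.
Qed.

Lemma esup_ge S v r : (forall r0, S r0 -> r0 <= v) -> S r ->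
  exists l, esup S = Some l /\ r <= l.
Proof.
  intros H Hr. destruct (esup_finite S) as [l El]; [exists v; intros x Hx; auto|eauto|].
  exists l. split; auto. apply (proj1 (esup_lub S l El)); auto.
Qed.

Definition efin (X : ext) : R := match X with Some u => u | None => 0 end.

Lemma eadd_Some_inv x z r : eadd x z = Some r ->
  exists u v, x = Some u /\ z = Some v /\ r = u + v.
Proof. destruct x, z; simpl; intros E; inversion E; eauto. Qed.

Lemma emul_le c X v s : 0 <= c -> ele X (Some v) -> emul c X = Some s -> s <= c * v.
Proof.
  intros Hc HX E. destruct X as [u|]; simpl in *.
  - inversion E; subst. apply Rmult_le_compat_l; auto.
  - destruct (Req_EM_T c 0); inversion E; subst. lra.
Qed.

Lemma emul_efin c X : (exists u, X = Some u) \/ c = 0 -> emul c X = Some (c * efin X).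
Proof.
  intros [[u ->]| ->]; [reflexivity|].
  destruct X as [u|]; simpl; [reflexivity|].
  destruct (Req_EM_T 0 0); [f_equal; ring|congruence].
Qed.

Lemma esum_le f n r (h : nat -> R) : esum f n = Some r ->
  (forall j s, (j <= n)%nat -> f j = Some s -> s <= h j) -> r <= sum_f_R0 h n.
Proof.
  revert r. induction n; simpl; intros r E H.
  - apply (H 0%nat); auto.
  - apply eadd_Some_inv in E. destruct E as [u [v [E1 [E2 ->]]]].
    assert (u <= sum_f_R0 h n) by (apply IHn; auto).
    assert (v <= h (S n)) by (apply (H (S n)); auto). lra.
Qed.

Lemma esum_Some f n (g : nat -> R) : (forall j, (j <= n)%nat -> f j = Some (g j)) ->
  esum f n = Some (sum_f_R0 g n).
Proof.
  induction n; simpl; intros H; [apply H; auto|].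
  rewrite IHn, H by auto. reflexivity.
Qed.

Section DominantZMatrix.
Variables (M : nat) (T : Type) (a : nat -> T -> nat -> R).

Definition row_sum (i : nat) (t : T) : R := sum_f_R0 (fun j => a i t j) M.

Definition H3_row (i : nat) (t : T) : Prop :=
  wdd_row M a i t /\
  (forall j, (j <= M)%nat -> j <> i -> a i t j <= 0) /\
  0 <= a i t i /\ (~ sdd_row M a i t -> a i t i <= 1).

Definition H3_rows (P : nat -> T) : Prop := forall i, (i <= M)%nat -> H3_row i (P i).

(* Under (H3), the only obstruction to the invertibility of A(P). *)
Definition zero_sum_closed (P : nat -> T) (K : nat -> Prop) : Prop :=
  (exists p, (p <= M)%nat /\ K p) /\
  forall p, (p <= M)%nat -> K p -> row_sum p (P p) = 0 /\
    forall j, (j <= M)%nat -> a p (P p) j <> 0 -> K j.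

Lemma row_sum_split i t : (i <= M)%nat ->
  row_sum i t = a i t i + sum_f_R0 (fun j => if Nat.eq_dec j i then 0 else a i t j) M.
Proof. apply sum_f_R0_split_at. Qed.

Lemma offdiag_abs_H3 i t : H3_row i t ->
  offdiag_abs M a i t = - sum_f_R0 (fun j => if Nat.eq_dec j i then 0 else a i t j) M.
Proof.
  intros [_ [Hz _]]. unfold offdiag_abs. rewrite <- sum_f_R0_opp. apply sum_eq.
  intros j Hj. destruct (Nat.eq_dec j i); [lra|]. rewrite Rabs_left1; auto.
Qed.

Lemma row_sum_ge0 i t : (i <= M)%nat -> H3_row i t -> 0 <= row_sum i t.
Proof.
  intros Hi H. pose proof (offdiag_abs_H3 i t H) as E. destruct H as [Hw [_ [Hd _]]].
  unfold wdd_row in Hw. rewrite E, Rabs_right in Hw by lra. rewrite row_sum_split by auto. lra.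
Qed.

Lemma row_sum_eq0_not_sdd i t : (i <= M)%nat -> H3_row i t -> row_sum i t = 0 ->
  ~ sdd_row M a i t.
Proof.
  intros Hi H Hr. pose proof (offdiag_abs_H3 i t H) as E. destruct H as [Hw [_ [Hd _]]].
  unfold sdd_row. rewrite E, Rabs_right by lra. rewrite row_sum_split in Hr by auto. lra.
Qed.

Lemma sum_row_shift i t (x : nat -> R) m :
  sum_f_R0 (fun j => a i t j * x j) M = m * row_sum i t + sum_f_R0 (fun j => a i t j * (x j - m)) M.
Proof. unfold row_sum. rewrite scal_sum, <- sum_plus. apply sum_eq. intros; ring. Qed.

Lemma matvec_lin (P : nat -> T) (x z : nat -> R) c1 c2 i :
  matvec M a P (fun j => c1 * x j + c2 * z j) i = c1 * matvec M a P x i + c2 * matvec M a P z i.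
Proof. unfold matvec. rewrite !scal_sum, <- sum_plus. apply sum_eq. intros; ring. Qed.

Lemma matvec_sub (P : nat -> T) (x z : nat -> R) i :
  matvec M a P (fun j => x j - z j) i = matvec M a P x i - matvec M a P z i.
Proof. unfold matvec. rewrite <- minus_sum. apply sum_eq. intros; ring. Qed.

Variable P : nat -> T.
Hypothesis HP : H3_rows P.

(* Rows in the argmax set of a kernel vector average their neighbours, so that set is
   zero-sum closed. *)
Lemma matvec_kernel_le0 (x : nat -> R) : ~ (exists K, zero_sum_closed P K) ->
  (forall i, (i <= M)%nat -> matvec M a P x i = 0) -> forall i, (i <= M)%nat -> x i <= 0.
Proof.
  intros HnK Hx.
  destruct (finite_argmax M x) as [p [Hp Hm]].
  destruct (Rle_dec (x p) 0) as [Hle|Hgt].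
  { intros i Hi. specialize (Hm i Hi). lra. }
  exfalso. apply HnK. exists (fun j => (j <= M)%nat /\ x j = x p).
  split; [exists p; auto|].
  intros q Hq [_ Hxq].
  pose proof (Hx q Hq) as E. unfold matvec in E. rewrite (sum_row_shift q (P q) x (x p)) in E.
  assert (Hterm : forall j, (j <= M)%nat -> 0 <= a q (P q) j * (x j - x p)).
  { intros j Hj. destruct (Nat.eq_dec j q) as [->|ne]; [rewrite Hxq; lra|].
    destruct (HP q Hq) as [_ [Hz _]]. specialize (Hz j Hj ne). specialize (Hm j Hj). nra. }
  assert (Hs : 0 <= sum_f_R0 (fun j => a q (P q) j * (x j - x p)) M)
    by (apply sum_f_R0_nonneg; auto).
  assert (Hr : 0 <= row_sum q (P q)) by (apply row_sum_ge0; auto).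
  assert (Hs0 : sum_f_R0 (fun j => a q (P q) j * (x j - x p)) M = 0) by nra.
  split; [nra|].
  intros j Hj Ha. split; auto.
  pose proof (sum_f_R0_nonneg_eq0 _ M Hterm Hs0 j Hj) as Z.
  apply Rmult_integral in Z. destruct Z; [contradiction|lra].
Qed.

Lemma matvec_kernel_eq0 (x : nat -> R) : ~ (exists K, zero_sum_closed P K) ->
  (forall i, (i <= M)%nat -> matvec M a P x i = 0) -> forall i, (i <= M)%nat -> x i = 0.
Proof.
  intros HnK Hx i Hi.
  assert (Hx' : forall i, (i <= M)%nat -> matvec M a P (fun j => (-1) * x j + 0 * x j) i = 0).
  { intros k Hk. rewrite matvec_lin, Hx by auto. ring. }
  pose proof (matvec_kernel_le0 x HnK Hx i Hi).
  pose proof (matvec_kernel_le0 _ HnK Hx' i Hi). simpl in *. lra.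
Qed.

Lemma matvec_pos_ge0 (z : nat -> R) :
  (forall i, (i <= M)%nat -> 0 < matvec M a P z i) -> forall i, (i <= M)%nat -> 0 <= z i.
Proof.
  intros Hz.
  destruct (finite_argmax M (fun j => - z j)) as [p [Hp Hm]]. simpl in Hm.
  destruct (Rle_dec 0 (z p)) as [H0|Hlt].
  { intros i Hi. specialize (Hm i Hi). lra. }
  exfalso. pose proof (Hz p Hp) as E. unfold matvec in E.
  rewrite (sum_row_shift p (P p) z (z p)) in E.
  assert (Hs : 0 <= sum_f_R0 (fun j => - (a p (P p) j * (z j - z p))) M).
  { apply sum_f_R0_nonneg. intros j Hj. destruct (Nat.eq_dec j p) as [->|ne]; [lra|].
    destruct (HP p Hp) as [_ [Hzz _]]. specialize (Hzz j Hj ne). specialize (Hm j Hj). nra. }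
  rewrite sum_f_R0_opp in Hs.
  assert (Hr : 0 <= row_sum p (P p)) by (apply row_sum_ge0; auto).
  nra.
Qed.

Variable B : nat -> nat -> R.
Hypothesis HB : is_inverse M (Amat a P) B.

Lemma matvec_inverse_rowsum i : (i <= M)%nat ->
  matvec M a P (fun j => sum_f_R0 (fun k => B j k) M) i = 1.
Proof.
  intros Hi. unfold matvec.
  rewrite (sum_eq _ (fun j => sum_f_R0 (fun k => a i (P i) j * B j k) M))
    by (intros j Hj; rewrite scal_sum; apply sum_eq; intros; ring).
  rewrite sum_f_R0_comm.
  rewrite (sum_eq _ (fun k => (if Nat.eq_dec i k then 1 else 0) * 1)).
  - apply sum_f_R0_delta; auto.
  - intros k Hk. rewrite Rmult_1_r, <- (proj1 (HB i k Hi Hk)). reflexivity.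
Qed.

(* Perturb x by a small multiple of w = B 1, which satisfies A w = 1 > 0. *)
Lemma matvec_nonneg_inv (x : nat -> R) :
  (forall i, (i <= M)%nat -> 0 <= matvec M a P x i) -> forall i, (i <= M)%nat -> 0 <= x i.
Proof.
  intros Hx i Hi.
  set (w := fun j => sum_f_R0 (fun k => B j k) M).
  assert (Hz : forall e, 0 < e -> 0 <= x i + e * w i).
  { intros e He.
    assert (0 <= 1 * x i + e * w i); [|lra].
    apply (matvec_pos_ge0 (fun j => 1 * x j + e * w j)); auto.
    intros k Hk. rewrite matvec_lin. unfold w. rewrite matvec_inverse_rowsum by auto.
    specialize (Hx k Hk). lra. }
  destruct (Rle_dec 0 (x i)) as [|Hn]; auto.
  exfalso. set (e := - x i / (2 * (Rabs (w i) + 1))).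
  assert (Hw : 0 < Rabs (w i) + 1) by (pose proof (Rabs_pos (w i)); lra).
  assert (He : 0 < e) by (unfold e; apply Rdiv_lt_0_compat; lra).
  specialize (Hz e He).
  assert (e * w i <= e * Rabs (w i)) by (apply Rmult_le_compat_l; [lra|apply Rle_abs]).
  assert (e * (Rabs (w i) + 1) = - x i / 2) by (unfold e; field; lra).
  nra.
Qed.

Lemma matvec_le_bound C (d : nat -> R) delta :
  (forall i j, (i <= M)%nat -> (j <= M)%nat -> Rabs (B i j) <= C) -> 0 <= delta ->
  (forall i, (i <= M)%nat -> matvec M a P d i <= delta) ->
  forall i, (i <= M)%nat -> d i <= delta * (INR (S M) * C).
Proof.
  intros HC Hd Hm i Hi.
  set (w := fun j => sum_f_R0 (fun k => B j k) M).
  assert (Hx : 0 <= delta * w i + (-1) * d i).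
  { apply (matvec_nonneg_inv (fun j => delta * w j + (-1) * d j)); auto.
    intros k Hk. rewrite matvec_lin. unfold w. rewrite matvec_inverse_rowsum by auto.
    specialize (Hm k Hk). lra. }
  assert (w i <= C * INR (S M)).
  { apply sum_f_R0_le_const. intros k Hk. specialize (HC i k Hi Hk).
    pose proof (Rle_abs (B i k)). lra. }
  assert (delta * w i <= delta * (C * INR (S M))) by (apply Rmult_le_compat_l; auto).
  nra.
Qed.

End DominantZMatrix.

Lemma nonsingular_solve M (A : nat -> nat -> R) (b : nat -> R) : nonsingular M A ->
  exists x, forall i, (i <= M)%nat -> sum_f_R0 (fun j => A i j * x j) M = b i.
Proof.
  intros [B HB]. exists (fun j => sum_f_R0 (fun k => B j k * b k) M). intros i Hi.
  rewrite (sum_eq _ (fun j => sum_f_R0 (fun k => A i j * B j k * b k) M))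
    by (intros j Hj; rewrite scal_sum; apply sum_eq; intros; ring).
  rewrite sum_f_R0_comm.
  rewrite (sum_eq _ (fun k => (if Nat.eq_dec i k then 1 else 0) * b k)).
  - apply sum_f_R0_delta; auto.
  - intros k Hk. rewrite <- (proj1 (HB i k Hi Hk)). unfold matmul_entry.
    rewrite Rmult_comm, scal_sum. apply sum_eq. intros; ring.
Qed.

Module MatrixInverse.
Import all_boot all_algebra Rstruct GRing.Theory.
Local Open Scope ring_scope.

Lemma sum_f_R0_big (f : nat -> R) (n : nat) : sum_f_R0 f n = \sum_(k < n.+1) f k.
Proof.
elim: n => [|n IH]; first by rewrite big_ord_recr big_ord0 /= add0r.
by rewrite big_ord_recr /= IH.
Qed.

Lemma kernel_trivial_nonsingular (M : nat) (A : nat -> nat -> R) :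
  (forall x : nat -> R,
     (forall i, le i M -> sum_f_R0 (fun j => Rmult (A i j) (x j)) M = 0) ->
     forall i, le i M -> x i = 0) ->
  nonsingular M A.
Proof.
move=> Hker.
pose Am : 'M[R]_(M.+1) := \matrix_(i < M.+1, j < M.+1) A i j.
have entry (F : 'M[R]_(M.+1)) (i j : nat) : le i M -> le j M ->
    matmul_entry M A (fun k l => F (inord k) (inord l)) i j = (Am *m F) (inord i) (inord j)
    /\ matmul_entry M (fun k l => F (inord k) (inord l)) A i j = (F *m Am) (inord i) (inord j).
  move=> /leP Hi /leP Hj; rewrite /matmul_entry !sum_f_R0_big !mxE.
  by split; apply: eq_bigr => l _; rewrite !mxE ?inordK ?ltnS // inord_val.
have Hu : Am \in unitmx.
  rewrite unitmxE unitfE -det_tr.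
  apply/negP => /det0P [v nz0 vA].
  move/negP: nz0; apply; apply/eqP/matrixP => i j.
  rewrite ord1 mxE -[j]inord_val.
  apply: (Hker (fun k => v 0 (inord k))); last by apply/leP; rewrite -ltnS.
  move=> k /leP Hk.
  transitivity ((v *m Am^T) 0 (inord k)); last by rewrite vA mxE.
  rewrite sum_f_R0_big mxE; apply: eq_bigr => l _.
  by rewrite !mxE inordK // mulrC inord_val.
exists (fun i j => invmx Am (inord i) (inord j)) => i j Hi Hj.
have [E1 E2] := entry (invmx Am) i j Hi Hj.
rewrite E1 E2 mulmxV // mulVmx // mxE.
move/leP: Hi => Hi; move/leP: Hj => Hj.
case: (Nat.eq_dec i j) => [->|ne]; first by rewrite eqxx.
case: eqP => // E; exfalso; apply: ne.
by have := congr1 (@nat_of_ord _) E; rewrite !inordK ?ltnS.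
Qed.
End MatrixInverse.

Definition policy_residual (M : nat) {T : Type} (a : nat -> T -> nat -> R) (y : nat -> T -> R)
  (U : nat -> R) (P : nat -> T) (i : nat) : R :=
  - matvec M a P U i + y i (P i).

Definition supersolution (M : nat) {T : Type} (a : nat -> T -> nat -> R) (y : nat -> T -> R)
  (Pset : nat -> T -> Prop) (V : nat -> R) : Prop :=
  forall P, inP M Pset P -> forall i, (i <= M)%nat -> policy_residual M a y V P i <= 0.

Section BellmanOperator.
Variables (M : nat) (T : Type) (a : nat -> T -> nat -> R) (y : nat -> T -> R).
Variable Pset : nat -> T -> Prop.
Hypothesis H3h : H3 M a Pset.

Lemma H3_rows_of P : inP M Pset P -> H3_rows M T a P.
Proof. intros HP i Hi. exact (H3h P HP i Hi). Qed.

Lemma yhat_Some_inv i t r : yhat M a y i t = Some r -> ~ sdd_row M a i t /\ r = y i t.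
Proof. unfold yhat. destruct (excluded_middle_informative _); intros E; inversion E; auto. Qed.

Lemma yhat_not_sdd i t : ~ sdd_row M a i t -> yhat M a y i t = Some (y i t).
Proof. unfold yhat. destruct (excluded_middle_informative _); [contradiction|auto]. Qed.

Lemma Mterm_le i t X (V : nat -> R) r : (i <= M)%nat -> H3_row M T a i t ->
  (forall j, (j <= M)%nat -> ele (X j) (Some (V j))) -> Mterm M a y i t X = Some r ->
  r <= V i - sum_f_R0 (fun j => a i t j * V j) M + y i t.
Proof.
  intros Hi HR HX E. unfold Mterm in E.
  apply eadd_Some_inv in E. destruct E as [u12 [u3 [E12 [E3 ->]]]].
  apply eadd_Some_inv in E12. destruct E12 as [r1 [r2 [E1 [E2 ->]]]].
  apply yhat_Some_inv in E3. destruct E3 as [Hns ->].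
  destruct HR as [_ [Hz [_ H1]]]. specialize (H1 Hns).
  assert (r1 <= (1 - a i t i) * V i) by (apply (emul_le _ (X i)); auto; lra).
  assert (r2 <= sum_f_R0 (fun j => - (if Nat.eq_dec j i then 0 else a i t j * V j)) M).
  { apply (esum_le _ _ _ _ E2). intros j s Hj Ej. destruct (Nat.eq_dec j i).
    - inversion Ej; lra.
    - specialize (Hz j Hj n).
      assert (s <= - a i t j * V j) by (apply (emul_le _ (X j)); auto; lra). lra. }
  rewrite sum_f_R0_opp in H0.
  rewrite (sum_f_R0_split_at (fun j => a i t j * V j) M i Hi).
  lra.
Qed.

Lemma Mop_arg_le_supersolution V X i : supersolution M a y Pset V -> (i <= M)%nat ->
  (forall j, (j <= M)%nat -> ele (X j) (Some (V j))) ->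
  forall r, (exists P, inP M Pset P /\ Mterm M a y i (P i) X = Some r) -> r <= V i.
Proof.
  intros HV Hi HX r [P [HP E]].
  pose proof (Mterm_le i (P i) X V r Hi (H3h P HP i Hi) HX E).
  pose proof (HV P HP i Hi). unfold policy_residual, matvec in H0. lra.
Qed.

Lemma Mpow_le_supersolution V : supersolution M a y Pset V -> forall n i, (i <= M)%nat ->
  ele (Mpow M a y Pset n (fun j => Some (V j)) i) (Some (V i)).
Proof.
  intros HV n. induction n; intros i Hi; simpl; [lra|].
  apply esup_le. apply Mop_arg_le_supersolution; auto.
Qed.

(* Entries of X outside K may be -oo; they only meet zero coefficients, and 0 * (-oo) = 0. *)
Lemma Mterm_ge_closed p t X (V : nat -> R) (K : nat -> Prop) N : (p <= M)%nat ->
  H3_row M T a p t -> row_sum M T a p t = 0 -> K p ->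
  (forall j, (j <= M)%nat -> a p t j <> 0 -> K j) ->
  (forall j, (j <= M)%nat -> K j -> exists x, X j = Some x /\ V j - N <= x) ->
  exists r, Mterm M a y p t X = Some r /\
    V p - N - sum_f_R0 (fun j => a p t j * V j) M + y p t <= r.
Proof.
  intros Hp HR Hrs Kp Hcl HX.
  pose proof (row_sum_eq0_not_sdd M T a p t Hp HR Hrs) as Hns.
  assert (Hlow : forall j, (j <= M)%nat -> K j -> V j - N <= efin (X j)).
  { intros j Hj Kj. destruct (HX j Hj Kj) as [x [-> Hx]]. exact Hx. }
  assert (Hfin : forall j, (j <= M)%nat -> (exists u, X j = Some u) \/ - a p t j = 0).
  { intros j Hj. destruct (Req_dec (a p t j) 0) as [E|E]; [right; lra|left].
    destruct (HX j Hj (Hcl j Hj E)) as [x [Ex _]]. eauto. }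
  set (g := fun j => if Nat.eq_dec j p then 0 else - a p t j * efin (X j)).
  exists ((1 - a p t p) * efin (X p) + sum_f_R0 g M + y p t). split.
  { unfold Mterm. rewrite (emul_efin _ (X p)).
    2:{ left. destruct (HX p Hp Kp) as [x [Ex _]]. eauto. }
    rewrite (esum_Some _ M g).
    - rewrite yhat_not_sdd by exact Hns. reflexivity.
    - intros j Hj. unfold g. destruct (Nat.eq_dec j p); [reflexivity|]. apply emul_efin; auto. }
  destruct HR as [_ [Hz [_ H1]]]. specialize (H1 Hns).
  assert (Hg : sum_f_R0 (fun j => - (if Nat.eq_dec j p then 0 else a p t j * V j)
               + (if Nat.eq_dec j p then 0 else a p t j) * N) M <= sum_f_R0 g M).
  { apply sum_Rle. intros j Hj. unfold g. destruct (Nat.eq_dec j p) as [|ne]; [lra|].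
    destruct (Req_dec (a p t j) 0) as [E|E]; [rewrite E; lra|].
    specialize (Hlow j Hj (Hcl j Hj E)). specialize (Hz j Hj ne).
    assert (- a p t j * (V j - N) <= - a p t j * efin (X j)) by (apply Rmult_le_compat_l; lra).
    lra. }
  rewrite sum_plus, sum_f_R0_opp, <- scal_sum in Hg.
  pose proof (sum_f_R0_split_at (fun j => a p t j * V j) M p Hp).
  pose proof (row_sum_split M T a p t Hp) as Er. rewrite Hrs in Er.
  assert ((1 - a p t p) * (V p - N) <= (1 - a p t p) * efin (X p))
    by (apply Rmult_le_compat_l; [lra|apply Hlow; auto]).
  nra.
Qed.

Lemma Mpow_ge_closed V P K delta : supersolution M a y Pset V -> inP M Pset P ->
  zero_sum_closed M T a P K ->
  (forall i, (i <= M)%nat -> - delta <= policy_residual M a y V P i) ->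
  forall n p, (p <= M)%nat -> K p ->
  exists r, Mpow M a y Pset n (fun j => Some (V j)) p = Some r /\ V p - INR n * delta <= r.
Proof.
  intros HV HP [_ HZ] Hd n. induction n as [|n IHn]; intros p Hp Kp.
  - exists (V p). simpl. split; auto. lra.
  - set (X := Mpow M a y Pset n (fun j => Some (V j))).
    change (exists r, Mop M a y Pset X p = Some r /\ V p - INR (S n) * delta <= r).
    destruct (HZ p Hp Kp) as [Hrs Hcl].
    destruct (Mterm_ge_closed p (P p) X V K (INR n * delta) Hp (H3h P HP p Hp) Hrs Kp Hcl IHn)
      as [r [Er Hr]].
    assert (HXV : forall j, (j <= M)%nat -> ele (X j) (Some (V j)))
      by (intros; apply Mpow_le_supersolution; auto).
    destruct (esup_ge _ (V p) r (Mop_arg_le_supersolution V X p HV Hp HXV)) as [l [El Hl]].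
    { exists P; auto. }
    exists l. split; [exact El|].
    pose proof (Hd p Hp). unfold policy_residual, matvec in *. rewrite S_INR. lra.
Qed.

Hypothesis H4h : H4 M a y Pset.

(* (H4) makes some iterate of the operator drop strictly below V p, while on a zero-sum closed
   set of a delta-optimal policy the iterates lose at most delta per step. *)
Lemma near_optimal_not_closed V : supersolution M a y Pset V -> forall p, (p <= M)%nat ->
  exists e, 0 < e /\ forall d, 0 < d < e -> forall P, inP M Pset P ->
    (forall i, (i <= M)%nat -> - d <= policy_residual M a y V P i) ->
    forall K, zero_sum_closed M T a P K -> ~ K p.
Proof.
  intros HV p Hp.
  destruct (H4h V p Hp) as [m1 [m2 [Hm Helt]]].
  pose proof (Mpow_le_supersolution V HV m1 p Hp) as Hu.
  destruct (Mpow M a y Pset m2 (fun j => Some (V j)) p) as [r2|] eqn:E2.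
  - destruct (Mpow M a y Pset m1 (fun j => Some (V j)) p) as [r1|];
      simpl in Helt, Hu; [|contradiction].
    pose proof (pos_INR m2).
    exists ((V p - r2) / (INR m2 + 1)). split; [apply Rdiv_lt_0_compat; lra|].
    intros d Hd P HP Hk K HK Kp.
    destruct (Mpow_ge_closed V P K d HV HP HK Hk m2 p Hp Kp) as [r [Er Hr]].
    rewrite E2 in Er. inversion Er; subst r.
    assert (INR m2 * d <= INR m2 * ((V p - r2) / (INR m2 + 1))) by (apply Rmult_le_compat_l; lra).
    assert ((INR m2 + 1) * ((V p - r2) / (INR m2 + 1)) = V p - r2) by (field; lra).
    nra.
  - exists 1. split; [lra|]. intros d Hd P HP Hk K HK Kp.
    destruct (Mpow_ge_closed V P K d HV HP HK Hk m2 p Hp Kp) as [r [Er _]].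
    rewrite E2 in Er. discriminate.
Qed.

End BellmanOperator.

Definition solves_bellman (M : nat) {T : Type} (a : nat -> T -> nat -> R) (y : nat -> T -> R)
  (Q : nat -> T -> Prop) (V : nat -> R) : Prop :=
  forall i, (i <= M)%nat -> Hsup M a y Q V i = Some 0.

Section HsupFacts.
Variables (M : nat) (T : Type) (a : nat -> T -> nat -> R) (y : nat -> T -> R).

Lemma Hsup_spec Q U i h : Hsup M a y Q U i = Some h ->
  (forall P, inP M Q P -> policy_residual M a y U P i <= h) /\
  (forall d, 0 < d -> exists P, inP M Q P /\ h - d < policy_residual M a y U P i).
Proof.
  intros E. apply esup_lub in E. destruct E as [Hub Hl]. split.
  - intros P HP. apply Hub. exists P. split; auto.
  - intros d Hd. apply not_all_not_ex. intros Hn.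
    assert (h <= h - d); [|lra].
    apply Hl. intros r [P [HP ->]]. specialize (Hn P).
    apply Rnot_lt_le. intro; apply Hn; split; auto.
Qed.

Lemma Hsup_eq0_intro Q U i : (forall P, inP M Q P -> policy_residual M a y U P i <= 0) ->
  (forall d, 0 < d -> exists P, inP M Q P /\ - d < policy_residual M a y U P i) ->
  Hsup M a y Q U i = Some 0.
Proof.
  intros Hu Hl. unfold Hsup.
  destruct (esup_finite (fun r => exists P, inP M Q P /\ r = - matvec M a P U i + y i (P i)))
    as [l E].
  - exists 0. intros r [P [HP ->]]. apply Hu; auto.
  - destruct (Hl 1 Rlt_0_1) as [P [HP _]]. eexists; exists P; split; eauto.
  - rewrite E. apply esup_lub in E. destruct E as [Hub Hlub]. f_equal.
    assert (l <= 0) by (apply Hlub; intros r [P [HP ->]]; apply Hu; auto).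
    destruct (Rle_dec 0 l); [lra|].
    destruct (Hl (- l) ltac:(lra)) as [P [HP HP2]].
    assert (policy_residual M a y U P i <= l) by (apply Hub; exists P; split; auto). lra.
Qed.

Lemma solves_bellman_supersolution Q V : solves_bellman M a y Q V -> supersolution M a y Q V.
Proof. intros HV P HP i Hi. exact (proj1 (Hsup_spec Q V i 0 (HV i Hi)) P HP). Qed.

Lemma near_optimal_policy (t0 : T) Q U (h : nat -> R) d : 0 < d ->
  (forall i, (i <= M)%nat -> Hsup M a y Q U i = Some (h i)) ->
  exists P, inP M Q P /\ forall i, (i <= M)%nat -> h i - d < policy_residual M a y U P i.
Proof.
  intros Hd Hh.
  destruct (finite_choice t0 M
    (fun i t => Q i t /\ h i - d < - sum_f_R0 (fun j => a i t j * U j) M + y i t)) as [P HP].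
  - intros i Hi. destruct (proj2 (Hsup_spec Q U i (h i) (Hh i Hi)) d Hd) as [P [HP HPk]].
    exists (P i). split; [apply HP; auto|exact HPk].
  - exists P. split; intros i Hi; apply HP; auto.
Qed.

Variables (Pset : nat -> T -> Prop) (Ca : R).
Hypothesis HCa : forall P, inP M Pset P ->
  forall i, (i <= M)%nat -> Rabs (y i (P i)) <= Ca /\
    forall j, (j <= M)%nat -> Rabs (a i (P i) j) <= Ca.

Lemma matvec_abs_le P U i : inP M Pset P -> (i <= M)%nat ->
  Rabs (matvec M a P U i) <= Ca * sum_f_R0 (fun j => Rabs (U j)) M.
Proof.
  intros HP Hi. unfold matvec. eapply Rle_trans; [apply sum_f_R0_triangle|].
  rewrite scal_sum. apply sum_Rle. intros j Hj. rewrite Rabs_mult, (Rmult_comm (Rabs (U j))).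
  apply Rmult_le_compat_r; [apply Rabs_pos|]. apply (HCa P HP i Hi); auto.
Qed.

Lemma policy_residual_shift P X Z i eta : inP M Pset P -> (i <= M)%nat ->
  (forall j, (j <= M)%nat -> Rabs (X j - Z j) <= eta) ->
  policy_residual M a y X P i <= policy_residual M a y Z P i + Ca * INR (S M) * eta.
Proof.
  intros HP Hi H.
  assert (Hc : 0 <= Ca)
    by (pose proof (proj1 (HCa P HP i Hi)); pose proof (Rabs_pos (y i (P i))); lra).
  assert (Hs : sum_f_R0 (fun j => Rabs (Z j - X j)) M <= eta * INR (S M)).
  { apply sum_f_R0_le_const. intros j Hj. rewrite Rabs_minus_sym. auto. }
  pose proof (matvec_abs_le P (fun j => Z j - X j) i HP Hi) as Hm.
  rewrite matvec_sub in Hm.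
  pose proof (Rle_abs (matvec M a P Z i - matvec M a P X i)).
  assert (Ca * sum_f_R0 (fun j => Rabs (Z j - X j)) M <= Ca * (eta * INR (S M)))
    by (apply Rmult_le_compat_l; auto).
  unfold policy_residual. lra.
Qed.

Lemma Hsup_finite Q U i : (forall P, inP M Q P -> inP M Pset P) -> (exists P, inP M Q P) ->
  (i <= M)%nat -> exists h, Hsup M a y Q U i = Some h.
Proof.
  intros HQ [P0 HP0] Hi. apply esup_finite.
  - exists (Ca * sum_f_R0 (fun j => Rabs (U j)) M + Ca). intros r [P [HP ->]].
    pose proof (matvec_abs_le P U i (HQ P HP) Hi). pose proof (proj1 (HCa P (HQ P HP) i Hi)).
    pose proof (Rle_abs (- matvec M a P U i)). pose proof (Rle_abs (y i (P i))).
    rewrite Rabs_Ropp in *. lra.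
  - eexists; exists P0; split; eauto.
Qed.

Lemma solves_bellman_of_sub Pset' V : (forall P, inP M Pset' P -> inP M Pset P) ->
  (exists P, inP M Pset' P) -> solves_bellman M a y Pset' V ->
  (forall i, (i <= M)%nat -> ele (Hsup M a y Pset V i) (Some 0)) ->
  solves_bellman M a y Pset V.
Proof.
  intros Hsub HP0 HV' Hle i Hi. apply Hsup_eq0_intro.
  - intros P HP.
    destruct (Hsup_finite Pset V i (fun P HP => HP)) as [h Eh]; [|exact Hi|].
    { destruct HP0 as [P0 HP0]. exists P0. auto. }
    pose proof (proj1 (Hsup_spec Pset V i h Eh) P HP).
    specialize (Hle i Hi). rewrite Eh in Hle. simpl in Hle. lra.
  - intros d Hd. destruct (proj2 (Hsup_spec Pset' V i 0 (HV' i Hi)) d Hd) as [P [HP HPk]].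
    exists P. split; auto. lra.
Qed.

End HsupFacts.

Section Comparison.
Variables (M : nat) (T : Type) (a : nat -> T -> nat -> R) (y : nat -> T -> R).
Variable Pset : nat -> T -> Prop.
Hypothesis H1h : H1 M a Pset.
Hypothesis H3h : H3 M a Pset.
Hypothesis H4h : H4 M a y Pset.
Variable t0 : T.

Lemma near_optimal_nonsingular V : supersolution M a y Pset V ->
  exists e, 0 < e /\ forall d, 0 < d < e -> forall P, inP M Pset P ->
    (forall i, (i <= M)%nat -> - d <= policy_residual M a y V P i) -> nonsingular M (Amat a P).
Proof.
  intros HV.
  destruct (finite_small M _ (near_optimal_not_closed M T a y Pset H3h H4h V HV))
    as [e [He Hnc]].
  exists e. split; auto. intros d Hd P HP Hk.
  apply MatrixInverse.kernel_trivial_nonsingular. intros x Hx.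
  apply (matvec_kernel_eq0 M T a P (H3_rows_of M T a Pset H3h P HP)); [|exact Hx].
  intros [K HK]. destruct (proj1 HK) as [p [Hp Kp]]. exact (Hnc d Hd p Hp P HP Hk K HK Kp).
Qed.

(* A d-optimal policy for the solution V is invertible for small d, and its inverse,
   bounded by (H1), turns A(P)(V - U) <= d into V - U <= O(d). *)
Lemma comparison V U : solves_bellman M a y Pset V -> supersolution M a y Pset U ->
  forall i, (i <= M)%nat -> V i <= U i.
Proof.
  intros HVs HU.
  destruct (near_optimal_nonsingular V (solves_bellman_supersolution M T a y Pset V HVs))
    as [e [He Hinv]].
  destruct H1h as [C HC].
  set (D := INR (S M) * (Rabs C + 1)).
  assert (HD : 0 < D)
    by (unfold D; pose proof (lt_0_INR (S M) ltac:(lia)); pose proof (Rabs_pos C); nra).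
  assert (Hbound : forall d, 0 < d < e -> forall i, (i <= M)%nat -> V i - U i <= d * D).
  { intros d Hd.
    destruct (near_optimal_policy M T a y t0 Pset V (fun _ => 0) d) as [P [HP Hk]];
      [lra|exact HVs|].
    destruct (Hinv d Hd P HP) as [B HB]; [intros i Hi; specialize (Hk i Hi); lra|].
    apply (matvec_le_bound M T a P (H3_rows_of M T a Pset H3h P HP) B HB (Rabs C + 1)).
    - intros i j Hi Hj. pose proof (HC P B HP HB i j Hi Hj). pose proof (Rle_abs C). lra.
    - lra.
    - intros i Hi. rewrite matvec_sub. pose proof (Hk i Hi). pose proof (HU P HP i Hi).
      unfold policy_residual in *. lra. }
  intros i Hi. assert (V i - U i <= 0); [|lra]. apply le_epsilon. intros eta Heta.
  set (d := Rmin (e / 2) (eta / D)).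
  assert (Hd : 0 < d) by (unfold d; apply Rmin_case; [lra|apply Rdiv_lt_0_compat; lra]).
  assert (d * D <= eta).
  { assert (d <= eta / D) by apply Rmin_r.
    replace eta with (eta / D * D) by (field; lra). apply Rmult_le_compat_r; lra. }
  assert (Hde : d < e) by (pose proof (Rmin_l (e / 2) (eta / D)); unfold d; lra).
  pose proof (Hbound d (conj Hd Hde) i Hi). lra.
Qed.

Lemma solves_bellman_unique V W : solves_bellman M a y Pset V -> solves_bellman M a y Pset W ->
  forall i, (i <= M)%nat -> V i = W i.
Proof.
  intros HV HW i Hi.
  pose proof (comparison V W HV (solves_bellman_supersolution M T a y Pset W HW) i Hi).
  pose proof (comparison W V HW (solves_bellman_supersolution M T a y Pset V HV) i Hi). lra.
Qed.

End Comparison.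

Section PolicyIteration.
Variables (M : nat) (T : Type) (a : nat -> T -> nat -> R) (y : nat -> T -> R).
Variables (Pset Pset' : nat -> T -> Prop) (C Ca : R).
Hypothesis HC : forall P B, inP M Pset P -> is_inverse M (Amat a P) B ->
  forall i j, (i <= M)%nat -> (j <= M)%nat -> Rabs (B i j) <= C.
Hypothesis HCa : forall P, inP M Pset P ->
  forall i, (i <= M)%nat -> Rabs (y i (P i)) <= Ca /\
    forall j, (j <= M)%nat -> Rabs (a i (P i) j) <= Ca.
Hypothesis H3h : H3 M a Pset.
Hypothesis Hsub : forall P, inP M Pset' P -> inP M Pset P.
Hypothesis Hne' : exists P, inP M Pset' P.
Hypothesis Hns : forall P, inP M Pset' P -> nonsingular M (Amat a P).
Variables (eps : nat -> R) (Pol : nat -> nat -> T) (U : nat -> nat -> R).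
Hypothesis Hpi : eps_policy_iteration M a y Pset' eps Pol U.

Let D := INR (S M) * (Rabs C + 1).

Lemma Ca_ge0 : 0 <= Ca.
Proof.
  destruct Hne' as [P HP].
  pose proof (proj1 (HCa P (Hsub P HP) 0%nat ltac:(lia))).
  pose proof (Rabs_pos (y 0%nat (P 0%nat))). lra.
Qed.

Lemma PI_matvec_le_bound l (d : nat -> R) delta : (1 <= l)%nat -> 0 <= delta ->
  (forall i, (i <= M)%nat -> matvec M a (Pol l) d i <= delta) ->
  forall i, (i <= M)%nat -> d i <= delta * D.
Proof.
  intros Hl Hd Hm. destruct Hpi as [_ [_ Hstep]]. destruct (Hstep l Hl) as [HPl _].
  destruct (Hns _ HPl) as [B HB].
  apply (matvec_le_bound M T a (Pol l) (H3_rows_of M T a Pset H3h _ (Hsub _ HPl)) B HB);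
    auto.
  intros i j Hi Hj. pose proof (HC _ B (Hsub _ HPl) HB i j Hi Hj). pose proof (Rle_abs C). lra.
Qed.

Lemma PI_bounded l i : (1 <= l)%nat -> (i <= M)%nat -> Rabs (U l i) <= Ca * D.
Proof.
  intros Hl Hi. pose proof Ca_ge0.
  destruct Hpi as [_ [_ Hstep]]. destruct (Hstep l Hl) as [HPl [_ Hsol]].
  assert (Hy : forall k, (k <= M)%nat -> Rabs (y k (Pol l k)) <= Ca)
    by (intros k Hk; apply (HCa _ (Hsub _ HPl) k Hk)).
  apply Rabs_le. split.
  - assert ((-1) * U l i + 0 * U l i <= Ca * D); [|lra].
    apply (PI_matvec_le_bound l (fun j => (-1) * U l j + 0 * U l j)); auto.
    intros k Hk. rewrite matvec_lin, Hsol by auto.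
    pose proof (Hy k Hk). pose proof (Rabs_Ropp (y k (Pol l k))).
    pose proof (Rle_abs (- y k (Pol l k))). lra.
  - apply (PI_matvec_le_bound l (U l)); auto.
    intros k Hk. rewrite Hsol by auto. pose proof (Hy k Hk). pose proof (Rle_abs (y k (Pol l k))).
    lra.
Qed.

Lemma PI_Hsup_finite W i : (i <= M)%nat -> exists h, Hsup M a y Pset' W i = Some h.
Proof. apply (Hsup_finite M T a y Pset Ca HCa); auto. Qed.

(* The previous policy has zero residual at U (l-1), so H(U (l-1); P') >= 0. *)
Lemma PI_residual_ge l i : (2 <= l)%nat -> (i <= M)%nat ->
  - eps l <= policy_residual M a y (U (l - 1)%nat) (Pol l) i.
Proof.
  intros Hl Hi. destruct Hpi as [_ [_ Hstep]].
  destruct (Hstep l ltac:(lia)) as [_ [Hele _]].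
  destruct (Hstep (l - 1)%nat ltac:(lia)) as [HPl1 [_ Hsol1]].
  destruct (PI_Hsup_finite (U (l - 1)%nat) i Hi) as [h Eh].
  specialize (Hele i Hi). rewrite Eh in Hele. simpl in Hele.
  pose proof (proj1 (Hsup_spec M T a y Pset' _ i h Eh) _ HPl1) as Hh.
  unfold policy_residual in *. rewrite Hsol1 in Hh by auto. lra.
Qed.

Lemma PI_step_le l i : (2 <= l)%nat -> (i <= M)%nat -> U (l - 1)%nat i - U l i <= eps l * D.
Proof.
  intros Hl Hi. destruct Hpi as [Heps [_ Hstep]].
  destruct (Hstep l ltac:(lia)) as [_ [_ Hsol]].
  apply (PI_matvec_le_bound l (fun j => U (l - 1)%nat j - U l j)); auto.
  - lia.
  - apply Rlt_le, Heps; lia.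
  - intros k Hk. rewrite matvec_sub, Hsol by auto. pose proof (PI_residual_ge l k Hl Hk).
    unfold policy_residual in *. lra.
Qed.

(* The iterates are bounded and increase up to the summable errors eps l * D. *)
Lemma PI_cv : exists L, forall i, (i <= M)%nat -> Un_cv (fun l => U l i) (L i).
Proof.
  destruct Hpi as [Heps [[s Hs] _]].
  assert (HD : 0 <= D) by (unfold D; pose proof (pos_INR (S M)); pose proof (Rabs_pos C); nra).
  assert (Hsum : forall n, sum_f_R0 eps (S n) <= s).
  { intros n. apply (growing_ineq (fun n => sum_f_R0 eps (S n))).
    - intros k. simpl. pose proof (Heps (S (S k)) ltac:(lia)). lra.
    - intros e He. destruct (Hs e He) as [N HN]. exists N. intros k Hk. apply HN. lia. }
  apply (finite_choice 0 M (fun i L => Un_cv (fun l => U l i) L)). intros i Hi.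
  destruct (cv_almost_increasing (fun n => U (S n) i) (fun n => eps (S n) * D)
              (Ca * D) (D * (s - eps 0%nat))) as [l Hl].
  - intros n. pose proof (Heps (S n) ltac:(lia)). nra.
  - intros n. rewrite <- scal_sum.
    specialize (Hsum n). rewrite (decomp_sum eps (S n) ltac:(lia)) in Hsum. simpl in Hsum.
    apply Rmult_le_compat_l; lra.
  - intros n. pose proof (PI_bounded (S n) i ltac:(lia) Hi). pose proof (Rle_abs (U (S n) i)).
    lra.
  - intros n. exact (PI_step_le (S (S n)) i ltac:(lia) Hi).
  - exists l. apply Un_cv_unshift. exact Hl.
Qed.

Variable L : nat -> R.
Hypothesis HL : forall i, (i <= M)%nat -> Un_cv (fun l => U l i) (L i).

Let Lip := Ca * INR (S M).

Lemma PI_uniform_cv eta : 0 < eta ->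
  exists N, forall k, (k >= N)%nat -> forall j, (j <= M)%nat -> Rabs (U k j - L j) <= eta.
Proof.
  intros He. apply (finite_eventually M (fun j k => Rabs (U k j - L j) <= eta)).
  intros j Hj. destruct (HL j Hj eta He) as [N HN]. exists N. intros k Hk.
  specialize (HN k Hk). unfold R_dist in HN. lra.
Qed.

(* A positive residual of L at P would persist at U (l-1) for large l, while the residual of
   the eps l-optimal policy Pol l at U (l-1) is within eps l of it and tends to 0. *)
Lemma PI_limit_residual_le0 P i : inP M Pset' P -> (i <= M)%nat ->
  policy_residual M a y L P i <= 0.
Proof.
  intros HP Hi. apply Rnot_lt_le. intros Hk.
  destruct Hpi as [_ [[s Hs] Hstep]].
  assert (HLip : 0 <= Lip) by (unfold Lip; pose proof Ca_ge0; pose proof (pos_INR (S M)); nra).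
  set (kap := policy_residual M a y L P i) in *.
  set (eta := kap / (3 * Lip + 2)).
  assert (Het : 0 < eta) by (unfold eta; apply Rdiv_lt_0_compat; lra).
  destruct (PI_uniform_cv eta Het) as [N1 HN1].
  destruct (series_term_small eps s Hs eta Het) as [N2 HN2].
  set (l := (max N1 N2 + 2)%nat).
  assert (A1 : kap <= policy_residual M a y (U (l - 1)%nat) P i + Lip * eta).
  { apply (policy_residual_shift M T a y Pset Ca HCa); auto. intros j Hj.
    rewrite Rabs_minus_sym. apply HN1; [unfold l; lia|auto]. }
  destruct (PI_Hsup_finite (U (l - 1)%nat) i Hi) as [h Eh].
  assert (A2 : policy_residual M a y (U (l - 1)%nat) P i <= h)
    by (apply (proj1 (Hsup_spec M T a y Pset' _ i h Eh)); auto).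
  destruct (Hstep l ltac:(unfold l; lia)) as [HPl [Hele Hsol]].
  specialize (Hele i Hi). rewrite Eh in Hele. simpl in Hele.
  assert (A3 : policy_residual M a y (U (l - 1)%nat) (Pol l) i <=
               policy_residual M a y (U l) (Pol l) i + Lip * (2 * eta)).
  { apply (policy_residual_shift M T a y Pset Ca HCa); auto. intros j Hj.
    pose proof (HN1 (l - 1)%nat ltac:(unfold l; lia) j Hj).
    pose proof (HN1 l ltac:(unfold l; lia) j Hj).
    replace (U (l - 1)%nat j - U l j) with ((U (l - 1)%nat j - L j) - (U l j - L j)) by ring.
    eapply Rle_trans; [apply Rabs_triang|]. rewrite Rabs_Ropp. lra. }
  assert (A4 : policy_residual M a y (U l) (Pol l) i = 0)
    by (unfold policy_residual; rewrite Hsol by auto; ring).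
  pose proof (HN2 l ltac:(unfold l; lia)).
  assert (E : kap = (3 * Lip + 2) * eta) by (unfold eta; field; lra).
  unfold policy_residual in A3, A4, Hele. nra.
Qed.

Lemma PI_limit_residual_attained i d : (i <= M)%nat -> 0 < d ->
  exists P, inP M Pset' P /\ - d < policy_residual M a y L P i.
Proof.
  intros Hi Hd. destruct Hpi as [_ [_ Hstep]].
  assert (HLip : 0 <= Lip) by (unfold Lip; pose proof Ca_ge0; pose proof (pos_INR (S M)); nra).
  set (eta := d / (Lip + 1)).
  assert (Het : 0 < eta) by (unfold eta; apply Rdiv_lt_0_compat; lra).
  destruct (PI_uniform_cv eta Het) as [N HN].
  destruct (Hstep (S N) ltac:(lia)) as [HPl [_ Hsol]].
  exists (Pol (S N)). split; auto.
  assert (A1 : policy_residual M a y (U (S N)) (Pol (S N)) i <=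
               policy_residual M a y L (Pol (S N)) i + Lip * eta).
  { apply (policy_residual_shift M T a y Pset Ca HCa); auto. }
  assert (A2 : policy_residual M a y (U (S N)) (Pol (S N)) i = 0)
    by (unfold policy_residual; rewrite Hsol by auto; ring).
  assert (E : d = (Lip + 1) * eta) by (unfold eta; field; lra).
  nra.
Qed.

Lemma PI_limit_solves : solves_bellman M a y Pset' L.
Proof.
  intros i Hi. apply Hsup_eq0_intro.
  - intros P HP. apply PI_limit_residual_le0; auto.
  - intros d Hd. apply PI_limit_residual_attained; auto.
Qed.

End PolicyIteration.

Definition policy_step (M : nat) {T : Type} (a : nat -> T -> nat -> R) (y : nat -> T -> R)
  (Q : nat -> T -> Prop) (e : R) (W : nat -> R) (P : nat -> T) (U : nat -> R) : Prop :=
  inP M Q P /\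
  (forall i, (i <= M)%nat -> ele (Hsup M a y Q W i) (Some (- matvec M a P W i + y i (P i) + e))) /\
  (forall i, (i <= M)%nat -> matvec M a P U i = y i (P i)).

Section PolicyIterationExists.
Variables (M : nat) (T : Type) (a : nat -> T -> nat -> R) (y : nat -> T -> R).
Variables (Pset Pset' : nat -> T -> Prop) (Ca : R).
Hypothesis HCa : forall P, inP M Pset P ->
  forall i, (i <= M)%nat -> Rabs (y i (P i)) <= Ca /\
    forall j, (j <= M)%nat -> Rabs (a i (P i) j) <= Ca.
Hypothesis Hsub : forall P, inP M Pset' P -> inP M Pset P.
Variable P0 : nat -> T.
Hypothesis HP0 : inP M Pset' P0.
Hypothesis Hns : forall P, inP M Pset' P -> nonsingular M (Amat a P).

Lemma policy_step_exists e W : 0 < e -> exists P U, policy_step M a y Pset' e W P U.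
Proof.
  intros He.
  destruct (finite_choice 0 M (fun i h => Hsup M a y Pset' W i = Some h)) as [h Hh].
  { intros i Hi. exact (Hsup_finite M T a y Pset Ca HCa Pset' W i Hsub (ex_intro _ P0 HP0) Hi). }
  destruct (near_optimal_policy M T a y (P0 0%nat) Pset' W h e He Hh) as [P [HP HPk]].
  destruct (nonsingular_solve M (Amat a P) (fun i => y i (P i)) (Hns P HP)) as [U HU].
  exists P, U. split; [exact HP|split; [|exact HU]].
  intros i Hi. rewrite Hh by auto. simpl. pose proof (HPk i Hi).
  unfold policy_residual in *. lra.
Qed.

Lemma policy_iteration_exists : exists eps Pol U, eps_policy_iteration M a y Pset' eps Pol U.
Proof.
  set (eps := fun l : nat => (/ 2) ^ l).
  assert (Heps : forall l, 0 < eps l) by (intros l; apply pow_lt; lra).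
  assert (Hstep : forall k (W : nat -> R), exists PU : (nat -> T) * (nat -> R),
            policy_step M a y Pset' (eps (S k)) W (fst PU) (snd PU)).
  { intros k W. destruct (policy_step_exists (eps (S k)) W (Heps (S k))) as [P [U HPU]].
    exists (P, U). exact HPU. }
  set (F := fun k W => proj1_sig (constructive_indefinite_description _ (Hstep k W))).
  set (sq := nat_rect (fun _ => ((nat -> T) * (nat -> R))%type) (P0, fun _ => 0)
               (fun k PU => F k (snd PU))).
  exists eps, (fun l => fst (sq l)), (fun l => snd (sq l)).
  split; [|split].
  - intros l _. apply Heps.
  - exists (/ (1 - / 2)). intros e He.
    destruct (GP_infinite (/ 2) ltac:(rewrite Rabs_right; lra) e He) as [N HN].
    exists N. intros n Hn. rewrite (sum_eq _ (fun k => 1 * (/ 2) ^ k)); [exact (HN n Hn)|].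
    intros; unfold eps; ring.
  - intros [|k] Hl; [lia|]. replace (S k - 1)%nat with k by lia.
    exact (proj2_sig (constructive_indefinite_description _ (Hstep k (snd (sq k))))).
Qed.

End PolicyIterationExists.

Theorem theorem3p10 (M : nat) (T : Type) (a : nat -> T -> nat -> R) (y : nat -> T -> R)
  (Pset Pset' : nat -> T -> Prop) :
  (forall i, (i <= M)%nat -> exists t, Pset i t) ->
  H1 M a Pset -> H2 M a y Pset -> H3 M a Pset -> H4 M a y Pset ->
  (forall i t, (i <= M)%nat -> Pset' i t -> Pset i t) ->
  (forall i, (i <= M)%nat -> exists t, Pset' i t) ->
  (forall P, inP M Pset' P -> nonsingular M (Amat a P)) ->
  (forall U : nat -> R,
     (forall i, (i <= M)%nat -> Hsup M a y Pset' U i = Some 0) ->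
     forall i, (i <= M)%nat -> ele (Hsup M a y Pset U i) (Some 0)) ->
  exists Ustar : nat -> R,
    (forall i, (i <= M)%nat -> Hsup M a y Pset Ustar i = Some 0) /\
    (forall V : nat -> R,
       (forall i, (i <= M)%nat -> Hsup M a y Pset V i = Some 0) ->
       forall i, (i <= M)%nat -> V i = Ustar i) /\
    (forall eps Pol U, eps_policy_iteration M a y Pset' eps Pol U ->
       forall i, (i <= M)%nat -> Un_cv (fun l => U l i) (Ustar i)).
Proof.
  intros _ H1h [Ca HCa] H3h H4h Hsub Hne' Hns Hhyp.
  pose proof H1h as [C HC].
  destruct (Hne' 0%nat ltac:(lia)) as [t0 _].
  destruct (finite_choice t0 M Pset' Hne') as [P0 HP0].
  assert (Hsub' : forall P, inP M Pset' P -> inP M Pset P) by (intros P HP i Hi; auto).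
  assert (Hlimit : forall eps Pol U, eps_policy_iteration M a y Pset' eps Pol U ->
            exists L, (forall i, (i <= M)%nat -> Un_cv (fun l => U l i) (L i)) /\
                      solves_bellman M a y Pset L).
  { intros eps Pol U Hpi.
    destruct (PI_cv M T a y Pset Pset' C Ca HC HCa H3h Hsub' (ex_intro _ P0 HP0) Hns
                eps Pol U Hpi) as [L HL].
    pose proof (PI_limit_solves M T a y Pset Pset' Ca HCa Hsub' (ex_intro _ P0 HP0)
                  eps Pol U Hpi L HL) as HL'.
    exists L. split; [exact HL|].
    exact (solves_bellman_of_sub M T a y Pset Ca HCa Pset' L Hsub' (ex_intro _ P0 HP0)
             HL' (Hhyp L HL')). }
  destruct (policy_iteration_exists M T a y Pset Pset' Ca HCa Hsub' P0 HP0 Hns)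
    as [eps [Pol [U Hpi]]].
  destruct (Hlimit eps Pol U Hpi) as [L [_ HL]].
  exists L. split; [exact HL|split].
  - intros V HV. exact (solves_bellman_unique M T a y Pset H1h H3h H4h t0 V L HV HL).
  - intros eps' Pol' U' Hpi' i Hi.
    destruct (Hlimit eps' Pol' U' Hpi') as [L' [HL'cv HL']].
    rewrite <- (solves_bellman_unique M T a y Pset H1h H3h H4h t0 L' L HL' HL i Hi).
    exact (HL'cv i Hi).
Qed.
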